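(* Let $G$ be a connected graph and $v\in V(G)$. Let $G_v$ be the graph obtained from $G$ by adding a new vertex $v'$ adjacent to $v$ and to all vertices of $N_G(v)$. For a search tree $T$ on $G$, let $P(T)=\{T(i,j)\mid i\in\{0,\ldots,d_{T,v}\},\ j\in\{1,2\}\}$. Then $\{P(T)\mid T\in V(\mathcal{R}(G))\}$ is a partition of $V(\mathcal{R}(G_v))$.
   Context: For a connected graph $G$, a search tree on $G$ is a rooted tree with vertex set $V(G)$ defined recursively: its root is some vertex $r\in V(G)$, and the children of $r$ are the roots of search trees on the connected components of $G-r$. $V(\mathcal{R}(G))$ denotes the set of search trees on $G$. For a rooted tree $T$ with root $r_T$ and $w\in V(T)$, $d_{T,w}$ is the distance from $r_T$ to $w$. Insertion: for a rooted tree $T$, $v\in V(T)$ with $d=d_{T,v}$ and root-to-$v$ path $a_0,\ldots,a_d=v$, and $x\notin V(T)$: $T(0,x,v)$ has $x$ as new root with $T$ as its only subtree; for $1\le i\le d$, $T(i,x,v)$ is obtained by subdividing the edge $a_{i-1}a_i$ by $x$. Define $T(i,1)=T(i,v',v)$, and $T(i,2)=\rho^\ast(T(i,1))$, where $\rho$ is the permutation of $V(G_v)$ swapping $v$ and $v'$ and fixing all other vertices, and $\rho^\ast(R)$ is the rooted tree with edge set $\{\rho(a)\rho(b)\mid ab\in E(R)\}$ and root $\rho(r_R)$. *)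

From mathcomp Require Import all_boot.
Set Implicit Arguments. Unset Strict Implicit. Unset Printing Implicit Defensive.

Section Defs.
Variable V : finType.

(* A simple graph is an edge relation e : rel V (symmetric, irreflexive).     *)
(* A rooted tree on vertex set V is represented by its parent function        *)
(* T : {ffun V -> option V} (T x = None iff x is the root).  A rooted tree    *)
(* is determined by its edge set and root, i.e. by this parent function.      *)

Definition induced (e : rel V) (S : {set V}) : rel V :=
  fun x y => [&& x \in S, y \in S & e x y].

Definition component (e : rel V) (S C : {set V}) : Prop :=
  exists2 x, x \in S & C = [set y in S | connect (induced e S) x y].

(* stree e S r t : the restriction of the parent function t to S is a search
   tree on G[S] with root r (the parent of r itself is not constrained here):
   r \in S, and the children of r are the roots of search trees on the
   connected components of G[S] - r. *)
Inductive stree (e : rel V) (t : V -> option V) : {set V} -> V -> Prop :=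
| STree (S : {set V}) (r : V) :
    r \in S ->
    (forall C : {set V}, component e (S :\ r) C ->
       exists2 c, c \in C & (t c = Some r /\ stree e t C c)) ->
    stree e t S r.

Definition search_tree (e : rel V) (T : {ffun V -> option V}) : Prop :=
  exists r, T r = None /\ stree e T setT r.

Fixpoint anc (T : V -> option V) (k : nat) (w : V) : option V :=
  match k with
  | 0 => Some w
  | k'.+1 => obind T (anc T k' w)
  end.

Fixpoint depth_aux (T : V -> option V) (n : nat) (w : V) : nat :=
  match n with
  | 0 => 0
  | n'.+1 => match T w with None => 0 | Some u => (depth_aux T n' u).+1 end
  end.

(* d_{T,w}: distance from the root of T to w. *)
Definition depth (T : V -> option V) (w : V) : nat := depth_aux T #|V| w.

(* G_v on vertex type option V: Some x is the old vertex x, None is v'. *)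
Definition Gv (e : rel V) (v : V) : rel (option V) :=
  fun a b => match a, b with
  | Some x, Some y => e x y
  | None, Some y => (y == v) || e v y
  | Some x, None => (x == v) || e v x
  | None, None => false
  end.

(* Insertion T(i, v', v) with v' = None.  The root-to-v path is
   a_j = anc T (d - j) v, d = depth T v.
   i = 0 : v' is the new root, parent of the old root a_0 becomes v'.
   i >= 1: the edge a_{i-1} a_i is subdivided by v'. *)
Definition ins (T : {ffun V -> option V}) (i : nat) (v : V)
  : {ffun option V -> option (option V)} :=
  let d := depth T v in
  [ffun y => match y with
   | None => if i is 0 then None else omap Some (anc T (d - i).+1 v)
   | Some w => if Some w == anc T (d - i) v then Some None
               else omap Some (T w)
   end].

Definition rho (v : V) (y : option V) : option V :=
  match y with
  | None => Some v
  | Some w => if w == v then None else Some w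
  end.

(* rho^*(R): the rooted tree with edges rho(a)rho(b) and root rho(r_R). *)
Definition rhostar (v : V) (R : {ffun option V -> option (option V)})
  : {ffun option V -> option (option V)} :=
  [ffun y => omap (rho v) (R (rho v y))].

Definition PT (T : {ffun V -> option V}) (v : V)
  : {set {ffun option V -> option (option V)}} :=
  [set ins T i v | i : 'I_(depth T v).+1]
  :|: [set rhostar v (ins T i v) | i : 'I_(depth T v).+1].

End Defs.

From mathcomp Require Import all_boot.
Set Implicit Arguments. Unset Strict Implicit. Unset Printing Implicit Defensive.

(* A parent function is a search tree on a connected graph iff it is a rooted
   tree in which every edge joins a vertex to one of its ancestors and every
   child has a descendant adjacent to its parent ([search_treeP]); everything
   else only uses this characterisation.
   T(i,1) puts v' just above a_i, an ancestor of v.  The neighbours of v' are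
   v and the neighbours of v, all comparable with v and hence with v', so
   T(i,1) is a search tree on G_v, and so is T(i,2) because rho is an
   automorphism of G_v.  Conversely v and v' are adjacent, so in a search tree
   R on G_v one of them lies above the other.  If v' lies above v, then v' has
   a single child u (every child of v' has a descendant comparable with v),
   and contracting v' into u gives a search tree T on G with R = T(i,1) for
   a_i = u; otherwise this applies to rho^*(R).  Finally T is recovered from
   T(i,1) by contraction, and T(i,1) <> T'(j,2) because v' lies above v in the
   first tree and below v in the second. *)

Section ConnectLemmas.
Variables (T : finType) (r : rel T).

Lemma connect_ind x (P : T -> Prop) :
  P x -> (forall a b, connect r x a -> P a -> r a b -> P b) ->
  forall z, connect r x z -> P z.
Proof.
move=> Px Pstep z /connectP [p r_p ->].
have Ppath q a : connect r x a -> P a -> path r a q -> P (last a q).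
  elim: q a => [|b q IHq] a //= xa Pa /andP [r_ab r_q].
  exact: IHq (connect_trans xa (connect1 r_ab)) (Pstep _ _ xa Pa r_ab) r_q.
exact: Ppath (connect0 r x) Px r_p.
Qed.

Lemma connect_first x y : connect r x y -> x = y \/ exists2 z, r x z & connect r z y.
Proof.
move=> /connectP [[|z p] /= r_p ->]; [by left | right].
by case/andP: r_p => r_xz r_p; exists z => //; apply/connectP; exists p.
Qed.

Lemma connect_last x y : connect r x y -> x != y -> exists2 c, r c y & connect r x c.
Proof.
move=> xy; suff [->|//] : y = x \/ exists2 c, r c y & connect r x c by rewrite eqxx.
apply: (connect_ind (P := fun z => z = x \/ _)) xy => [|a b xa _ r_ab]; first by left.
by right; exists a.
Qed.

End ConnectLemmas.

Lemma connect_conj (T : finType) (r r' : rel T) (f : T -> T) : involutive f ->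
  (forall a b, r' a b = r (f a) (f b)) -> forall a b, connect r' a b = connect r (f a) (f b).
Proof.
move=> fK r'E a b; apply/idP/idP => [|ab]; last rewrite -[b]fK.
  apply: (connect_ind (P := fun z => connect r (f a) (f z))) => // c d _ ac r'_cd.
  by apply: connect_trans ac (connect1 _); rewrite -r'E.
apply: (connect_ind (P := fun z => connect r' a (f z))) ab => [|c d _ ac r_cd].
  by rewrite fK.
by apply: connect_trans ac (connect1 _); rewrite r'E !fK.
Qed.

Section RootedTrees.
Variable V : finType.
Implicit Types (t : V -> option V) (r x y : V).

Definition parent t : rel V := fun x y => t x == Some y.

Definition rooted t r := t r = None /\ forall y, connect (parent t) y r.

Definition subtree t x : {set V} := [set y | connect (parent t) y x].

Lemma connect_parent t x y : t x = Some y -> connect (parent t) x y.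
Proof. by move=> txy; apply: connect1; rewrite /parent txy. Qed.

Lemma connect_parent_first t x y : connect (parent t) x y ->
  x = y \/ exists2 z, t x = Some z & connect (parent t) z y.
Proof. by case/connect_first => [|[z /eqP]]; [left | right; exists z]. Qed.

Lemma connect_parent_total t x a b :
  connect (parent t) x a -> connect (parent t) x b ->
  connect (parent t) a b || connect (parent t) b a.
Proof.
move=> xa xb.
apply: (connect_ind (P := fun z => connect (parent t) z b || connect (parent t) b z)) xa.
  by rewrite xb.
move=> c d _ /orP [cb|bc] /eqP tcd; last first.
  by rewrite (connect_trans bc (connect_parent tcd)) orbT.
case: (connect_parent_first cb) => [<-|[z tcz zb]].
  by rewrite (connect_parent tcd) orbT.
by move: tcd; rewrite tcz => -[<-]; rewrite zb.
Qed.

Lemma connect_from_root t r y : t r = None -> connect (parent t) r y -> y = r.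
Proof. by move=> tr /connect_parent_first [->|[z]]; rewrite ?tr. Qed.

Section Rooted.
Variables (t : V -> option V) (r : V).
Hypothesis t_r : rooted t r.

Lemma parent_not_below x p : t x = Some p -> ~~ connect (parent t) p x.
Proof.
have [tr to_r] := t_r; move=> txp; apply/negP => px.
have x_max z : connect (parent t) x z -> connect (parent t) z x.
  apply: (connect_ind (P := fun z => connect (parent t) z x)) => [|a b _ ax /eqP tab].
    exact: connect0.
  case: (connect_parent_first ax) => [eax|[w taw wx]].
    by move: tab; rewrite eax txp => -[<-].
  by move: tab; rewrite taw => -[<-].
by move: txp; rewrite (connect_from_root tr (x_max _ (to_r x))) tr.
Qed.

Lemma parent_neq x : t x <> Some x.
Proof. by move=> txx; have := parent_not_below txx; rewrite connect0. Qed.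

Lemma connect_parent_antisym x y :
  connect (parent t) x y -> connect (parent t) y x -> x = y.
Proof.
case/connect_parent_first => [//|[z txz zy] yx].
by have := parent_not_below txz; rewrite (connect_trans zy yx).
Qed.

Lemma siblings_below_eq y c1 c2 p : t c1 = Some p -> t c2 = Some p ->
  connect (parent t) y c1 -> connect (parent t) y c2 -> c1 = c2.
Proof.
have below_eq a b : t a = Some p -> t b = Some p -> connect (parent t) a b -> a = b.
  move=> tap tbp /connect_parent_first [//|[z]]; rewrite tap => -[<-] pb.
  by have := parent_not_below tbp; rewrite pb.
move=> tc1 tc2 yc1 yc2; case/orP: (connect_parent_total yc1 yc2) => ?.
  exact: below_eq.
exact/esym/below_eq.
Qed.

Lemma subtree_child c x : t c = Some x -> subtree t c \subset subtree t x :\ x.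
Proof.
move=> tcx; apply/subsetP => w; rewrite !inE => wc.
rewrite (connect_trans wc (connect_parent tcx)) andbT; apply: contraTneq wc => ->.
exact: parent_not_below.
Qed.

Lemma card_subtree_child c x : t c = Some x -> #|subtree t c| < #|subtree t x|.
Proof.
move=> tcx; rewrite (cardsD1 x (subtree t x)) inE connect0 add1n ltnS.
exact/subset_leq_card/subtree_child.
Qed.

End Rooted.
End RootedTrees.

Section SearchTreeSpec.
Variables (V : finType) (e : rel V).
Hypothesis e_sym : symmetric e.
Implicit Types (t : V -> option V) (A S : {set V}).

Record search_tree_spec t : Prop := SearchTreeSpec {
  search_tree_rooted : exists r, rooted t r;
  search_tree_edge : forall x y, e x y ->
    connect (parent t) x y || connect (parent t) y x;
  search_tree_parent : forall x p, t x = Some p ->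
    exists2 y, connect (parent t) y x & e y p }.

Definition component_of A y : {set V} := [set z in A | connect (induced e A) y z].

Definition connected_on S := {in S &, forall x y, connect (induced e S) x y}.

Lemma induced_sym S : symmetric (induced e S).
Proof. by move=> a b; rewrite /induced andbCA e_sym. Qed.

Lemma connect_induced_sub (A B : {set V}) x y : A \subset B ->
  connect (induced e A) x y -> connect (induced e B) x y.
Proof.
move=> sAB; apply: connect_sub => a b /and3P [aA bA ab]; apply: connect1.
by rewrite /induced (subsetP sAB _ aA) (subsetP sAB _ bA).
Qed.

Lemma component_of_connected A y : connected_on (component_of A y).
Proof.
set C := component_of A y.
have yC z : connect (induced e A) y z -> connect (induced e C) y z.
  apply: (connect_ind (P := fun z => connect (induced e C) y z)) => // a b ya yCa.
  case/and3P => aA bA ab; apply: connect_trans yCa (connect1 _).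
  by rewrite /induced !inE aA bA ya (connect_trans ya (connect1 _)) // /induced aA bA.
move=> a b; rewrite !inE => /andP [_ /yC ya] /andP [_ /yC yb].
by rewrite (sym_connect_sym (induced_sym C)) in ya; apply: connect_trans ya yb.
Qed.

Lemma component_of_adjacent S r y : connected_on S -> r \in S -> y \in S :\ r ->
  exists2 z, z \in component_of (S :\ r) y & e z r.
Proof.
move=> S_conn rS yS; set C := component_of (S :\ r) y.
case: (boolP [exists z in C, e z r]) => [/exists_inP [z] | no_adj]; first by exists z.
have: r \in C; last by rewrite !inE eqxx.
apply: (connect_ind (P := fun z => z \in C)) (S_conn y r (subsetP (subD1set S r) y yS) rS).
  by rewrite inE yS connect0.
move=> a b _ aC /and3P [_ bS ab].
have br : b != r by apply: contraNneq no_adj => eb; apply/exists_inP; exists a; rewrite -?eb.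
move: aC; rewrite !inE br bS => /andP [aSr ya] /=; apply: connect_trans ya (connect1 _).
by case/andP: aSr => ar aS; rewrite /induced !inE br bS ar aS.
Qed.

Section ToStree.
Variable t : V -> option V.
Hypothesis t_spec : search_tree_spec t.

Lemma connect_induced_subtree z w : w \in subtree t z ->
  connect (induced e (subtree t z)) w z.
Proof.
have [[r t_r] _ t_par] := t_spec.
have [n] := ubnP #|subtree t z|; elim: n z w => // n IH z w; rewrite ltnS => card_z.
rewrite inE => wz; case: (eqVneq w z) => [->|w_neq_z]; first exact: connect0.
have [c /eqP tcz wc] := connect_last wz w_neq_z.
have [y yc yz] := t_par c z tcz.
have sub_cz : subtree t c \subset subtree t z.
  exact: subset_trans (subtree_child t_r tcz) (subsetDl _ _).
have {}IH u : u \in subtree t c -> connect (induced e (subtree t z)) u c.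
  move=> uc; apply: connect_induced_sub sub_cz (IH _ _ _ uc).
  exact: leq_trans (card_subtree_child t_r tcz) card_z.
apply: connect_trans (IH w _) _; first by rewrite inE.
have := IH y; rewrite inE (sym_connect_sym (induced_sym _)) => /(_ yc) cy.
apply: connect_trans cy (connect1 _).
by rewrite /induced yz !inE connect0 (connect_trans yc (connect_parent tcz)).
Qed.

Lemma component_subtree_child x c y : t c = Some x -> y \in subtree t c ->
  component_of (subtree t x :\ x) y = subtree t c.
Proof.
have [[r t_r] t_edge _] := t_spec; move=> tcx yc.
have sub_cx := subtree_child t_r tcx.
apply/setP => z; rewrite inE; apply/andP/idP => [[_ yz]|zc]; last first.
  split; first exact: (subsetP sub_cx).
  apply: connect_induced_sub sub_cx _.
  have := connect_induced_subtree zc; rewrite (sym_connect_sym (induced_sym _)).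
  exact/connect_trans/connect_induced_subtree.
rewrite inE; rewrite inE in yc.
apply: (connect_ind (P := fun z => connect (parent t) z c)) yz => // a b _ ac.
case/and3P => _ bx ab; case/orP: (t_edge _ _ ab) => [ab'|ba]; last exact: connect_trans ba ac.
case/orP: (connect_parent_total ab' ac) => // cb.
case: (connect_parent_first cb) => [->|[x' tcx' x'b]]; first exact: connect0.
move: tcx' x'b bx; rewrite tcx => -[<-] xb; rewrite !inE => /andP [b_neq_x bx].
by rewrite (connect_parent_antisym t_r xb bx) eqxx in b_neq_x.
Qed.

Lemma stree_subtree x : stree e t (subtree t x) x.
Proof.
have [[r t_r] _ _] := t_spec.
have [n] := ubnP #|subtree t x|; elim: n x => // n IH x; rewrite ltnS => card_x.
constructor => [|C [y yx ->]]; first by rewrite inE connect0.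
move: yx; rewrite !inE => /andP [y_neq_x yx].
have [c /eqP tcx yc] := connect_last yx y_neq_x.
rewrite -/(component_of _ y) (component_subtree_child tcx) ?inE //.
exists c; first by rewrite inE connect0.
by split=> //; apply: IH; apply: leq_trans (card_subtree_child t_r tcx) card_x.
Qed.

End ToStree.

Lemma search_tree_of_spec (t : {ffun V -> option V}) :
  search_tree_spec t -> search_tree e t.
Proof.
move=> t_spec; have [[r [tr to_r]] _ _] := t_spec; exists r; split=> //.
have -> : [set: V] = subtree t r by apply/setP => y; rewrite !inE to_r.
exact: stree_subtree.
Qed.

Definition search_tree_spec_on t S r :=
  [/\ forall y, y \in S -> connect (parent t) y r,
      {in S &, forall a b, e a b -> connect (parent t) a b || connect (parent t) b a} &
      forall x p, x \in S -> x != r -> t x = Some p ->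
        exists2 y, connect (parent t) y x & e y p].

Lemma search_tree_spec_on_children t S r : r \in S -> connected_on S ->
  (forall y, y \in S :\ r -> exists2 c, t c = Some r &
     search_tree_spec_on t (component_of (S :\ r) y) c) ->
  search_tree_spec_on t S r.
Proof.
move=> rS S_conn child.
have yC y : y \in S :\ r -> y \in component_of (S :\ r) y.
  by move=> ySr; rewrite inE ySr connect0.
have to_r y : y \in S -> connect (parent t) y r.
  move=> yS; case: (eqVneq y r) => [->|y_neq_r]; first exact: connect0.
  have ySr : y \in S :\ r by rewrite in_setD1 y_neq_r.
  have [c tcr [to_c _ _]] := child y ySr.
  exact: connect_trans (to_c _ (yC _ ySr)) (connect_parent tcr).
split=> // [a b aS bS ab | x p xS x_neq_r txp].
- case: (eqVneq a r) => [->|a_neq_r]; first by rewrite to_r ?orbT.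
  case: (eqVneq b r) => [->|b_neq_r]; first by rewrite to_r.
  have aSr : a \in S :\ r by rewrite in_setD1 a_neq_r.
  have bSr : b \in S :\ r by rewrite in_setD1 b_neq_r.
  have [c _ [_ edge_c _]] := child a aSr.
  have bC : b \in component_of (S :\ r) a.
    by rewrite inE bSr connect1 // /induced aSr bSr.
  exact: edge_c (yC _ aSr) bC ab.
- have xSr : x \in S :\ r by rewrite in_setD1 x_neq_r.
  have [c tcr [to_c _ par_c]] := child x xSr.
  case: (eqVneq x c) => [exc|x_neq_c]; last exact: par_c (yC _ xSr) x_neq_c txp.
  move: txp; rewrite exc tcr => -[<-].
  have [z zC zr] := component_of_adjacent S_conn rS xSr.
  by exists z => //; apply: to_c.
Qed.

Lemma stree_search_tree_spec_on t S r :
  stree e t S r -> connected_on S -> search_tree_spec_on t S r.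
Proof.
have [n] := ubnP #|S|; elim: n S r => // n IH S r; rewrite ltnS => card_S st.
case: st card_S => {}S {}r rS children card_S S_conn.
apply: search_tree_spec_on_children => // y ySr.
have [c cC [tcr c_stree]] := children _ (ex_intro2 _ _ y ySr erefl).
exists c => //; apply: (IH (component_of (S :\ r) y)) => //;
  last exact: component_of_connected.
apply: leq_trans card_S; apply: leq_ltn_trans (proper_card (properD1 rS)).
by apply/subset_leq_card/subsetP => z; rewrite inE => /andP [].
Qed.

Lemma search_treeP (t : {ffun V -> option V}) : (forall x y, connect e x y) ->
  search_tree e t <-> search_tree_spec t.
Proof.
move=> e_conn; split=> [[r [tr st]]|]; last exact: search_tree_of_spec.
have connT : connected_on [set: V].
  by move=> x y _ _; rewrite (@eq_connect _ _ e) // => a b; rewrite /induced !inE.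
have [to_r t_edge t_par] := stree_search_tree_spec_on st connT.
split=> [|x y|x p txp]; first by exists r; split=> // y; apply: to_r.
  exact: t_edge.
have x_neq_r : x != r by apply: contra_eq_neq txp => ->; rewrite tr.
exact: t_par (in_setT x) x_neq_r txp.
Qed.

End SearchTreeSpec.

Section Depth.
Variable V : finType.
Implicit Types (t : V -> option V) (r x : V).

Lemma ancD t k j x : anc t (k + j) x = obind (anc t j) (anc t k x).
Proof.
elim: j => [|j IHj] /=; first by rewrite addn0; case: (anc t k x).
by rewrite addnS /= IHj; case: (anc t k x).
Qed.

Lemma ancS t j x : anc t j.+1 x = obind (anc t j) (t x).
Proof. by rewrite -add1n ancD. Qed.

Lemma anc_connect t k x a : anc t k x = Some a -> connect (parent t) x a.
Proof.
elim: k a => [|k IHk] a /=; first by move=> [->]; apply: connect0.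
case ak: (anc t k x) => [b|] //= tba.
exact: connect_trans (IHk _ ak) (connect_parent tba).
Qed.

Lemma anc_path t x p : path (parent t) x p -> anc t (size p) x = Some (last x p).
Proof.
elim: p x => [|z p IHp] x // /andP [/eqP txz p_path].
by rewrite [size _]/= ancS txz /= IHp.
Qed.

Lemma depth_auxE t m x r N : anc t m x = Some r -> t r = None -> m <= N ->
  depth_aux t N x = m.
Proof.
elim: m x N => [|m IHm] x N.
  by move=> [->] tr _; case: N => //= N; rewrite tr.
rewrite ancS; case tx: (t x) => [w|] //= wr tr.
by case: N => // N mN /=; rewrite tx (IHm w N).
Qed.

Lemma anc_depth t r x : rooted t r -> anc t (depth t x) x = Some r.
Proof.
move=> [tr to_r]; have /connectP [p p_path r_last] := to_r x.
case/shortenP: p_path r_last => q q_path q_uniq _ r_last.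
have size_q : size q < #|V| by have := max_card (mem (x :: q)); rewrite (card_uniqP q_uniq).
have anc_q := anc_path q_path; rewrite -r_last in anc_q.
by rewrite /depth (depth_auxE anc_q tr (ltnW size_q)).
Qed.

Lemma connect_parent_anc t r x u : rooted t r -> connect (parent t) x u ->
  exists2 k, k <= depth t x & anc t k x = Some u.
Proof.
move=> t_r /connectP [p p_path ->]; exists (size p); last exact: anc_path.
rewrite leqNgt; apply/negP => depth_lt; move: (anc_path p_path).
by rewrite -(subnKC depth_lt) ancD /= (anc_depth _ t_r) /= t_r.1.
Qed.

End Depth.

Section Insertion.
Variables (V : finType) (e : rel V) (v : V).
Hypotheses (e_sym : symmetric e) (e_irr : irreflexive e).

Local Notation G := (Gv e v).
Local Notation tree := {ffun V -> option V}.
Local Notation vtree := {ffun option V -> option (option V)}.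

Lemma Gv_sym : symmetric G.
Proof. by move=> [a|] [b|] //=; rewrite e_sym. Qed.

Lemma Gv_connect : (forall x y, connect e x y) -> forall a b, connect G a b.
Proof.
move=> e_conn.
have old x y : connect G (Some x) (Some y).
  apply: (connect_ind (P := fun z => connect G (Some x) (Some z))) (e_conn x y) => //.
  by move=> a b _ xa ab; apply: connect_trans xa (connect1 _).
have new x : connect G None (Some x).
  by apply: connect_trans (old v x); apply: connect1; rewrite /= eqxx.
move=> [a|] [b|]; [exact: old | | exact: new | exact: connect0].
by rewrite (sym_connect_sym Gv_sym).
Qed.

Lemma rhoK : involutive (rho v).
Proof.
case=> [w|] /=; last by rewrite eqxx.
by case: (eqVneq w v) => [->|w_neq_v] /=; rewrite ?eqxx ?(negbTE w_neq_v).
Qed.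

Lemma Gv_rho a b : G (rho v a) (rho v b) = G a b.
Proof.
case: a b => [x|] [y|] /=; last by rewrite e_irr.
- case: (eqVneq x v) => [->|x_neq_v]; case: (eqVneq y v) => [->|y_neq_v] /=;
    by rewrite ?eqxx ?e_irr ?(negbTE x_neq_v) ?(negbTE y_neq_v) //= e_sym.
- by case: (eqVneq x v) => [->|x_neq_v] /=; rewrite ?eqxx ?(negbTE x_neq_v) //= e_sym.
- by case: (eqVneq y v) => [->|y_neq_v] /=; rewrite ?eqxx ?(negbTE y_neq_v).
Qed.

Lemma rhostarK : involutive (rhostar v).
Proof.
by move=> R; apply/ffunP => y; rewrite !ffunE rhoK; case: (R y) => //= c; rewrite rhoK.
Qed.

Lemma connect_rhostar (R : vtree) a b :
  connect (parent (rhostar v R)) a b = connect (parent R) (rho v a) (rho v b).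
Proof.
apply: connect_conj rhoK _ a b => {}a {}b; rewrite /parent ffunE.
by case: (R (rho v a)) => [c|] //=; apply/eqP/eqP => [[<-]|[->]]; rewrite rhoK.
Qed.

Lemma rhostar_spec (R : vtree) : search_tree_spec G R -> search_tree_spec G (rhostar v R).
Proof.
move=> [[r [Rr to_r]] R_edge R_par]; split.
- exists (rho v r); split; first by rewrite ffunE rhoK Rr.
  by move=> y; rewrite connect_rhostar rhoK.
- by move=> x y xy; rewrite !connect_rhostar; apply: R_edge; rewrite Gv_rho.
- move=> x p; rewrite ffunE; case Rx: (R (rho v x)) => [q|] //= [<-].
  have [y yx yq] := R_par _ _ Rx; exists (rho v y); last by rewrite Gv_rho.
  by rewrite connect_rhostar rhoK.
Qed.

(* [insert_above T a_i] is T(i,1), see [ins_insert_above]. *)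
Definition insert_above (T : tree) (u : V) : vtree :=
  [ffun y => match y with
   | None => omap Some (T u)
   | Some w => if w == u then Some None else omap Some (T w)
   end].

(* Deletes v' = None from R and hangs its children from its parent. *)
Definition contract (R : vtree) : tree :=
  [ffun w => odflt None (if R (Some w) == Some None then R None else R (Some w))].

Lemma insert_above_new T u : insert_above T u None = omap Some (T u).
Proof. by rewrite ffunE. Qed.

Lemma insert_above_self T u : insert_above T u (Some u) = Some None.
Proof. by rewrite ffunE eqxx. Qed.

Lemma insert_above_old T u w : w != u -> insert_above T u (Some w) = omap Some (T w).
Proof. by move=> w_neq_u; rewrite ffunE (negbTE w_neq_u). Qed.

Lemma insert_aboveK u : cancel (insert_above^~ u) contract.
Proof.
move=> T; apply/ffunP => w; rewrite ffunE; case: (eqVneq w u) => [->|w_neq_u].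
  by rewrite insert_above_self eqxx insert_above_new; case: (T u).
by rewrite insert_above_old //; case: (T w).
Qed.

Section InsertAbove.
Variables (T : tree) (u : V).
Local Notation R := (insert_above T u).

Lemma connect_insert_above a b :
  connect (parent T) a b -> connect (parent R) (Some a) (Some b).
Proof.
apply: (connect_ind (P := fun z => connect (parent R) (Some a) (Some z))) => //.
move=> c d _ ac /eqP Tcd; apply: connect_trans ac _.
case: (eqVneq c u) Tcd => [-> Tud|c_neq_u Tcd].
  apply: connect_trans (connect_parent (insert_above_self T u)) (connect_parent _).
  by rewrite insert_above_new Tud.
by apply: connect_parent; rewrite insert_above_old ?Tcd.
Qed.

Lemma connect_insert_above_to_new a :
  connect (parent T) a u -> connect (parent R) (Some a) None.
Proof.
move=> au; apply: connect_trans (connect_insert_above au) _.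
exact: connect_parent (insert_above_self T u).
Qed.

Lemma connect_insert_above_from_new p a : T u = Some p ->
  connect (parent T) p a -> connect (parent R) None (Some a).
Proof.
move=> Tup pa; apply: connect_trans (connect_parent _) (connect_insert_above pa).
by rewrite insert_above_new Tup.
Qed.

Lemma connect_insert_above_odflt x y :
  connect (parent R) x y -> connect (parent T) (odflt u x) (odflt u y).
Proof.
apply: (connect_ind (P := fun z => connect (parent T) (odflt u x) (odflt u z))) => //.
move=> a b _ xa /eqP Rab; apply: connect_trans xa _.
case: a Rab => [a|] /=; last first.
  by rewrite insert_above_new; case Tu: (T u) => [q|] //= [<-]; apply: connect_parent.
case: (eqVneq a u) => [->|a_neq_u]; first by rewrite insert_above_self => -[<-].
by rewrite insert_above_old //; case Ta: (T a) => [q|] //= [<-]; apply: connect_parent.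
Qed.

Lemma search_tree_spec_of_insert_above : search_tree_spec G R ->
  connect (parent R) (Some v) None -> search_tree_spec e T.
Proof.
move=> [[r0 [Rr0 to_r0]] R_edge R_par] v_new.
have lower := connect_insert_above_odflt.
split=> [|x y xy|x q Txq].
- exists (odflt u r0); split=> [|y]; last exact: lower _ _ (to_r0 (Some y)).
  case: r0 Rr0 {to_r0} => [r|]; last by rewrite insert_above_new; case: (T u).
  case: (eqVneq r u) => [->|r_neq_u]; first by rewrite insert_above_self.
  by rewrite insert_above_old //; case: (T r).
- by case/orP: (R_edge (Some x) (Some y) xy) => /lower ->; rewrite ?orbT.
- have [x' Rx'q <-] : exists2 x', R x' = Some (Some q) & odflt u x' = x.
    case: (eqVneq x u) Txq => [-> Tuq|x_neq_u Txq].
      by exists None; rewrite ?insert_above_new ?Tuq.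
    by exists (Some x); rewrite ?insert_above_old ?Txq.
  have [[y|] yx' yq] := R_par _ _ Rx'q; first by exists y => //; apply: lower _ _ yx'.
  case/orP: yq => [/eqP q_eq_v|vq].
    have := parent_not_below (conj Rr0 to_r0) Rx'q.
    by rewrite q_eq_v (connect_trans v_new yx').
  by exists v => //; apply: lower _ _ (connect_trans v_new yx').
Qed.

Hypothesis T_spec : search_tree_spec e T.

Lemma insert_above_rooted : exists r, rooted R r.
Proof.
have [[r [Tr to_r]] _ _] := T_spec; case: (eqVneq u r) => [u_eq_r|u_neq_r].
  exists None; split; first by rewrite insert_above_new u_eq_r Tr.
  case=> [y|]; last exact: connect0.
  by apply: connect_insert_above_to_new; rewrite u_eq_r.
exists (Some r); split; first by rewrite insert_above_old 1?eq_sym // Tr.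
case=> [y|]; first exact: connect_insert_above (to_r y).
case Tu: (T u) => [p|]; last by rewrite (connect_from_root Tu (to_r u)) eqxx in u_neq_r.
exact: connect_insert_above_from_new Tu (to_r p).
Qed.

Hypothesis vu : connect (parent T) v u.

Lemma insert_above_edge_new b : (b == v) || e v b ->
  connect (parent R) (Some b) None || connect (parent R) None (Some b).
Proof.
have [_ T_edge _] := T_spec; move=> vb.
have : connect (parent T) b v \/ connect (parent T) v b.
  by case/orP: vb => [/eqP ->|/T_edge /orP []]; [left; apply: connect0 | right | left].
case=> [bv|vb']; first by rewrite connect_insert_above_to_new // (connect_trans bv vu).
case/orP: (connect_parent_total vu vb') => [ub|bu].
  case: (connect_parent_first ub) => [<-|[z Tuz zb]].
    by rewrite connect_insert_above_to_new.
  by rewrite (connect_insert_above_from_new Tuz zb) orbT.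
by rewrite connect_insert_above_to_new.
Qed.

Lemma insert_above_edge x y : G x y ->
  connect (parent R) x y || connect (parent R) y x.
Proof.
have [_ T_edge _] := T_spec.
case: x y => [x|] [y|] //= xy; last by rewrite orbC; apply: insert_above_edge_new.
- by case/orP: (T_edge _ _ xy) => /connect_insert_above ->; rewrite ?orbT.
- exact: insert_above_edge_new.
Qed.

Lemma insert_above_parent x p : R x = Some p ->
  exists2 y, connect (parent R) y x & G y p.
Proof.
have [_ _ T_par] := T_spec; case: x => [x|].
- case: (eqVneq x u) => [->|x_neq_u].
    rewrite insert_above_self => -[<-]; exists (Some v); first exact: connect_insert_above.
    by rewrite /= eqxx.
  rewrite insert_above_old //; case Tx: (T x) => [q|] //= [<-].
  by have [y yx yq] := T_par _ _ Tx; exists (Some y); first exact: connect_insert_above.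
- rewrite insert_above_new; case Tu: (T u) => [q|] //= [<-].
  have [y yu yq] := T_par _ _ Tu; exists (Some y) => //.
  exact: connect_insert_above_to_new.
Qed.

Lemma insert_above_spec : search_tree_spec G R.
Proof.
split; [exact: insert_above_rooted | exact: insert_above_edge | exact: insert_above_parent].
Qed.

End InsertAbove.

Lemma insert_above_contract (R : vtree) u : search_tree_spec G R ->
  R (Some u) = Some None -> connect (parent R) (Some v) (Some u) ->
  R = insert_above (contract R) u.
Proof.
move=> [[r0 R_r0] R_edge R_par] Ru vu.
have only_child w : R (Some w) = Some None -> w = u.
  move=> Rw; have [[y|] yw yv'] := R_par _ _ Rw; last first.
    by have := parent_not_below R_r0 Rw; rewrite yw.
  (* y is v or a neighbour of v, hence comparable with v. *)
  have [z zw zu] : exists2 z, connect (parent R) z (Some w) & connect (parent R) z (Some u).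
    case/orP: yv' => [/eqP y_eq_v|vy]; first by exists (Some v); rewrite // -y_eq_v.
    case/orP: (R_edge (Some v) (Some y) vy) => [vy'|yv].
      by exists (Some v) => //; apply: connect_trans vy' yw.
    by exists (Some y) => //; apply: connect_trans yv vu.
  by case: (siblings_below_eq R_r0 Rw Ru zw zu).
apply/ffunP => -[w|]; last first.
  have RN := parent_neq R_r0 (x := None).
  by rewrite insert_above_new ffunE Ru eqxx; case: (R None) RN => [[q|]|].
case: (eqVneq w u) => [->|w_neq_u]; first by rewrite insert_above_self.
have Rw : R (Some w) != Some None by apply: contra_neq w_neq_u; apply: only_child.
by rewrite insert_above_old // ffunE (negbTE Rw); case: (R (Some w)) Rw => [[q|]|].
Qed.

Lemma insert_above_surj (R : vtree) : search_tree_spec G R ->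
  connect (parent R) (Some v) None -> exists2 T : tree, search_tree_spec e T &
    exists2 u, connect (parent T) v u & R = insert_above T u.
Proof.
move=> R_spec v_new; have [[r0 R_r0] _ _] := R_spec.
have [[u|] /eqP Ru vu] := connect_last v_new isT; last by have := parent_neq R_r0 Ru.
have R_eq := insert_above_contract R_spec Ru vu.
rewrite R_eq in R_spec v_new; exists (contract R); last exists u => //.
  exact: search_tree_spec_of_insert_above R_spec v_new.
exact: connect_insert_above_odflt v_new.
Qed.

Lemma ins_insert_above (T : tree) r i u : rooted T r ->
  anc T (depth T v - i) v = Some u -> ins T i v = insert_above T u.
Proof.
move=> T_r vu; apply/ffunP => -[w|]; rewrite /ins !ffunE /=; first by rewrite vu.
case: i vu => [|i] vu; last by rewrite vu.
by rewrite subn0 (anc_depth _ T_r) in vu; case: vu => <-; rewrite T_r.1.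
Qed.

Lemma mem_PT (T : tree) r R : rooted T r ->
  R \in PT T v <-> exists2 u, connect (parent T) v u &
    R = insert_above T u \/ R = rhostar v (insert_above T u).
Proof.
move=> T_r; split.
  have ins_above (i : 'I_(depth T v).+1) :
      exists2 u, connect (parent T) v u & ins T i v = insert_above T u.
    have i_le : i <= depth T v by rewrite -ltnS.
    case vu: (anc T (depth T v - i) v) => [u|].
      by exists u; [apply: anc_connect vu | apply: ins_insert_above T_r vu].
    by have := anc_depth v T_r; rewrite -{1}(subnK i_le) ancD vu.
  by rewrite inE => /orP [] /imsetP [i _ ->]; have [u vu ->] := ins_above i;
    exists u => //; [left | right].
move=> [u vu R_eq]; have [k k_le vu_k] := connect_parent_anc T_r vu.
have i_lt : depth T v - k < (depth T v).+1 by rewrite ltnS leq_subr.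
have ins_eq : ins T (depth T v - k) v = insert_above T u.
  by apply: ins_insert_above T_r _; rewrite subKn.
rewrite inE; apply/orP; case: R_eq => ->; [left | right]; apply/imsetP;
  by exists (Ordinal i_lt); rewrite //= ins_eq.
Qed.

Lemma insert_above_neq_rhostar (T1 T2 : tree) u1 u2 : search_tree_spec e T2 ->
  connect (parent T1) v u1 -> connect (parent T2) v u2 ->
  insert_above T1 u1 <> rhostar v (insert_above T2 u2).
Proof.
move=> T2_spec vu1 vu2 R_eq.
have [[r R2_r] _ _] := insert_above_spec T2_spec vu2.
have := connect_insert_above_to_new vu1; rewrite R_eq connect_rhostar /= eqxx => new_v.
by have := connect_parent_antisym R2_r new_v (connect_insert_above_to_new vu2).
Qed.

Hypothesis e_conn : forall x y, connect e x y.

Lemma PT_search_tree (T : tree) : search_tree e T ->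
  PT T v != set0 /\ forall R, R \in PT T v -> search_tree G R.
Proof.
move=> /(search_treeP e_sym _ e_conn) T_spec; have [[r T_r] _ _] := T_spec.
split=> [|R /(mem_PT _ T_r) [u vu [->|->]]].
- by apply/set0Pn; exists (ins T 0 v); rewrite inE; apply/orP; left; apply/imsetP; exists ord0.
- exact: search_tree_of_spec Gv_sym _ (insert_above_spec T_spec vu).
- exact: search_tree_of_spec Gv_sym _ (rhostar_spec (insert_above_spec T_spec vu)).
Qed.

Lemma PT_cover (R : vtree) : search_tree G R -> exists2 T, search_tree e T & R \in PT T v.
Proof.
move=> /(search_treeP Gv_sym _ (Gv_connect e_conn)) R_spec.
suff [T T_spec [u vu R_eq]] : exists2 T : tree, search_tree_spec e T & exists2 u,
    connect (parent T) v u & R = insert_above T u \/ R = rhostar v (insert_above T u).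
  have [[r T_r] _ _] := T_spec; exists T; first exact: search_tree_of_spec.
  by apply/(mem_PT _ T_r); exists u.
have G_v_new : G (Some v) None by rewrite /= eqxx.
have /orP [v_new|new_v] := search_tree_edge R_spec G_v_new.
  have [T T_spec [u vu ->]] := insert_above_surj R_spec v_new.
  by exists T => //; exists u => //; left.
have v_new : connect (parent (rhostar v R)) (Some v) None by rewrite connect_rhostar /= eqxx.
have [T T_spec [u vu R_eq]] := insert_above_surj (rhostar_spec R_spec) v_new.
by exists T => //; exists u => //; right; rewrite -R_eq rhostarK.
Qed.

Lemma PT_disjoint (T1 T2 : tree) : search_tree e T1 -> search_tree e T2 ->
  PT T1 v != PT T2 v -> [disjoint PT T1 v & PT T2 v].
Proof.
move=> /(search_treeP e_sym _ e_conn) T1_spec /(search_treeP e_sym _ e_conn) T2_spec.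
have [[r1 T1_r] _ _] := T1_spec; have [[r2 T2_r] _ _] := T2_spec.
apply: contraNT; rewrite disjoints_subset => /subsetPn [R R1]; rewrite inE negbK => R2.
apply/eqP; congr PT.
have [u1 vu1 R1_eq] := (mem_PT _ T1_r).1 R1; have [u2 vu2 R2_eq] := (mem_PT _ T2_r).1 R2.
case: R1_eq R2_eq => -> [R_eq|R_eq].
- by rewrite -(insert_aboveK u1 T1) R_eq insert_aboveK.
- by have := insert_above_neq_rhostar T2_spec vu1 vu2 R_eq.
- by have := insert_above_neq_rhostar T1_spec vu2 vu1 (esym R_eq).
- by rewrite -(insert_aboveK u1 T1) (inv_inj rhostarK R_eq) insert_aboveK.
Qed.

End Insertion.

Theorem proposition2p7 (V : finType) (e : rel V) (v : V) :
  symmetric e -> irreflexive e -> (forall x y, connect e x y) ->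
  [/\ (forall T, search_tree e T ->
          PT T v != set0 /\ (forall R, R \in PT T v -> search_tree (Gv e v) R)),
      (forall R, search_tree (Gv e v) R ->
          exists2 T, search_tree e T & R \in PT T v)
    & (forall T1 T2, search_tree e T1 -> search_tree e T2 ->
          PT T1 v != PT T2 v -> [disjoint PT T1 v & PT T2 v])].
Proof.
move=> e_sym e_irr e_conn; split.
- exact: PT_search_tree.
- exact: PT_cover.
- exact: PT_disjoint.
Qed.
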